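(* Let $\mathcal D$ be a $2$-$(v,k,\lambda)$ design admitting a flag-transitive point-imprimitive automorphism group $G$ preserving a nontrivial partition $\Sigma$ of the point set into $v_1$ classes of size $v_0$, and let $k_0,k_1,\mathcal D_0$ be as in the context. Then $v_0>k_0\ge2$, and one of the following holds: (1) $k_0=2$, $v=(v_0-1)(2k_1-1)+1$, and $G_\Delta^\Delta$ is $2$-transitive on $\Delta$; (2) $3\le k_0\le v_0-2$ and $\mathcal D_0$ is a $2$-design; (3) $3\le k_0=v_0-1$, $\mathcal D_0$ is a $1$-design, and $k=t(v_0-2)+1$, $v=t(v_0-1)+1$ for some integer $t\ge2$.
   Context: By the Camina–Zieschang theorem, in this situation there is a constant $k_0\ge 2$ such that every block meets every class $\Delta\in\Sigma$ in either $0$ or $k_0$ points; $k_0$ divides $k$, $k_1=k/k_0$ is the number of classes met by any block, and $\frac{v-1}{k-1}=\frac{v_0-1}{k_0-1}$. For $\Delta\in\Sigma$, $\mathcal D_0=\mathcal D_\Delta$ is the incidence structure with point set $\Delta$ and blocks the nonempty sets $B\cap\Delta$ ($B$ a block of $\mathcal D$); it is either a symmetric $1$-design with $k_0=v_0-1$ or a $2$-$(v_0,k_0,\lambda_0)$ design, and $G_\Delta^\Delta$ (the permutation group induced on $\Delta$ by its setwise stabilizer $G_\Delta$) acts flag-transitively on it. *)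

From mathcomp Require Import all_boot all_fingroup all_solvable.
Set Implicit Arguments. Unset Strict Implicit. Unset Printing Implicit Defensive.

Section Designs.
Variable P : finType.

Definition is_2design (X : {set P}) (Bs : {set {set P}}) (k lam : nat) : Prop :=
  [/\ 0 < lam,
      forall B, B \in Bs -> B \subset X /\ #|B| = k &
      forall x y, x \in X -> y \in X -> x != y ->
        #|[set B in Bs | (x \in B) && (y \in B)]| = lam].

Definition is_1design (X : {set P}) (Bs : {set {set P}}) (k r : nat) : Prop :=
  [/\ 0 < r,
      forall B, B \in Bs -> B \subset X /\ #|B| = k &
      forall x, x \in X -> #|[set B in Bs | x \in B]| = r].

Definition preserves_blocks (G : {set {perm P}}) (Bs : {set {set P}}) : Prop :=
  forall g B, g \in G -> B \in Bs -> (fun x => g x) @: B \in Bs.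

Definition flag_transitive (G : {set {perm P}}) (Bs : {set {set P}}) : Prop :=
  forall x B y C, B \in Bs -> x \in B -> C \in Bs -> y \in C ->
    exists2 g, g \in G & g x = y /\ (fun z => g z) @: B = C.

Definition induced_blocks (Bs : {set {set P}}) (Delta : {set P}) : {set {set P}} :=
  [set B :&: Delta | B in Bs & B :&: Delta != set0].

End Designs.

(* Counting the blocks through a point x of the class Delta, once against all
   points and once against Delta, gives r (k - 1) = (v - 1) lam and
   r (k0 - 1) = (v0 - 1) lam; hence 2 <= k0 < v0 and
   (v - 1) (k0 - 1) = (v0 - 1) (k - 1).  Flag-transitivity, together with the
   fact that G permutes the classes, makes every block of D_Delta induced by the
   same number m of blocks of D, so D_Delta is a 2-(v0, k0, lam / m) design;
   when k0 = 2 the same argument moves any pair of points of Delta to any other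
   by an element stabilising Delta.  When k0 = v0 - 1 the relation reads
   (v - 1) (v0 - 2) = (v0 - 1) (k - 1), and since v0 - 2 and v0 - 1 are
   coprime, v0 - 2 divides k - 1. *)

From mathcomp Require Import all_boot all_fingroup all_solvable.
From mathcomp Require Import zify.
Set Implicit Arguments. Unset Strict Implicit. Unset Printing Implicit Defensive.

Section Counting.
Variable P : finType.
Implicit Types (X B : {set P}) (Bs : {set {set P}}).

Lemma dvdn_card_partition (Sigma : {set {set P}}) B d :
  partition Sigma [set: P] -> (forall D, D \in Sigma -> #|B :&: D| \in [:: 0; d]) ->
  d %| #|B|.
Proof.
move=> partS meet; rewrite -sum1_card (eq_bigl (fun x => (x \in [set: P]) && (x \in B))).
  rewrite (set_partition_big_cond _ partS); apply: dvdn_sum => D SD.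
  have -> : \sum_(x in D | x \in B) 1 = #|B :&: D|.
    by rewrite -sum1_card; apply: eq_bigl => x; rewrite inE andbC.
  by have := meet D SD; rewrite !inE => /orP[]/eqP->.
by move=> x; rewrite in_setT.
Qed.

Lemma card_le2_other (A : {set P}) a b c :
  #|A| <= 2 -> a \in A -> b \in A -> c \in A -> a != b -> c != a -> c = b.
Proof.
move=> A_le2 aA bA cA ab ca; apply/eqP/negPn/negP => cb.
have : c |: [set a; b] \subset A.
  by apply/subsetP => z; rewrite !inE => /orP[/eqP->|/orP[]/eqP->].
move/subset_leq_card; rewrite cardsU1 cards2 !inE ab (negbTE ca) (negbTE cb) /=; lia.
Qed.

Lemma sum_pair_counts Bs X x :
  \sum_(y in X :\ x) #|[set B in Bs | (x \in B) && (y \in B)]| =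
  \sum_(B in [set B in Bs | x \in B]) #|(B :&: X) :\ x|.
Proof.
transitivity (\sum_(y in X :\ x) \sum_(B in [set B in Bs | x \in B]) (y \in B) : nat).
  apply: eq_bigr => y _; rewrite -sum1_card big_mkcond [RHS]big_mkcond /=.
  apply: eq_bigr => B _; rewrite !inE.
  by case: (B \in Bs); case: (x \in B); case: (y \in B).
rewrite exchange_big /=; apply: eq_bigr => B _.
rewrite -sum1_card big_mkcond [RHS]big_mkcond /=; apply: eq_bigr => y _.
by rewrite !inE; case: (y \in B); case: (y \in X); case: (y == x).
Qed.

Lemma replication_count Bs X x c lam :
  x \in X ->
  (forall y, y \in X -> x != y -> #|[set B in Bs | (x \in B) && (y \in B)]| = lam) ->
  (forall B, B \in Bs -> x \in B -> #|B :&: X| = c) ->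
  #|[set B in Bs | x \in B]| * (c - 1) = (#|X| - 1) * lam.
Proof.
move=> xX pairs meet; have := sum_pair_counts Bs X x.
rewrite (eq_bigr (fun _ => lam)) => [|y /setD1P[yx yX]]; last by rewrite pairs // eq_sym.
rewrite [RHS](eq_bigr (fun _ => c - 1)) => [|B /setIdP[bB xB]]; last first.
  by have := cardsD1 x (B :&: X); rewrite inE xB xX meet //; lia.
rewrite !sum_nat_const => <-; congr (_ * _).
by have := cardsD1 x X; rewrite xX /=; lia.
Qed.

Lemma is_2design_1design X Bs k lam :
  is_2design X Bs k lam -> 1 < k -> 1 < #|X| -> exists r, is_1design X Bs k r.
Proof.
move=> [lam_gt0 Bs_k pairs] k_gt1 X_gt1.
have rep x : x \in X -> #|[set B in Bs | x \in B]| * (k - 1) = (#|X| - 1) * lam.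
  move=> xX; apply: (replication_count xX) => [y yX xy|B /Bs_k[/setIidPl-> ->] //].
  exact: pairs.
have [x0 x0X] : exists x0, x0 \in X by apply/card_gt0P; lia.
exists #|[set B in Bs | x0 \in B]|; split => // [|x xX].
  by have := rep _ x0X; case: #|_| => //; rewrite mul0n; nia.
by apply/eqP; rewrite -(eqn_pmul2r (_ : 0 < k - 1)) ?rep //; lia.
Qed.

End Counting.

Lemma transitive2_of_pairs (T : finType) (H : {group {perm T}}) (S : {set T}) x y :
  H \subset 'N(S | 'P)%g -> x \in S -> y \in S -> x != y ->
  (forall x' y', x' \in S -> y' \in S -> x' != y' ->
     exists2 h, h \in H & h x = x' /\ h y = y') ->
  [transitive^2 H, on S | 'P].
Proof.
move=> nSH xS yS xy pairs.
have xy_on : [tuple x; y] \in 2.-dtuple(S).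
  by rewrite inE /= !inE andbT xy /=; apply/subsetP => z; rewrite !inE => /orP[]/eqP->.
apply/imsetP; exists [tuple x; y] => //; apply/setP => t; apply/idP/idP.
  move=> /dtuple_onP[t_inj tS]; apply/imsetP.
  have t01 : tnth t ord0 != tnth t (lift ord0 ord0) by apply/eqP => /t_inj.
  have [h hH [hx hy]] := pairs _ _ (tS ord0) (tS (lift ord0 ord0)) t01.
  exists h => //; apply: eq_from_tnth => -[[|[|//]] i_lt2]; rewrite tnth_map.
    by rewrite [tnth [tuple x; y] _](tnth_nth x) /= apermE hx; congr tnth; apply: val_inj.
  by rewrite [tnth [tuple x; y] _](tnth_nth x) /= apermE hy; congr tnth; apply: val_inj.
by case/imsetP => h hH ->; apply: n_act_dtuple => //; apply: (subsetP nSH).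
Qed.

Lemma class_relation_pred_params v v0 k :
  3 <= v0 - 1 -> 2 <= k -> 2 * v0 <= v ->
  (v - 1) * (v0 - 2) = (v0 - 1) * (k - 1) ->
  exists2 t, 2 <= t & k = t * (v0 - 2) + 1 /\ v = t * (v0 - 1) + 1.
Proof.
move=> v0_ge4 k_ge2 v_ge E.
have co : coprime (v0 - 2) (v0 - 1).
  by rewrite (_ : v0 - 1 = (v0 - 2).+1) ?coprimenS //; lia.
have /dvdnP[t kt] : v0 - 2 %| k - 1 by rewrite -(Gauss_dvdr _ co) -E dvdn_mull.
have vt : v - 1 = t * (v0 - 1).
  by apply/eqP; rewrite -(eqn_pmul2r (_ : 0 < v0 - 2)); [apply/eqP; nia | lia].
by exists t; [nia | split; lia].
Qed.

Section InducedStructure.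
Variables (P : finType) (blocks : {set {set P}}) (Delta : {set P}) (k lam k0 : nat).
Hypothesis design : is_2design [set: P] blocks k lam.
Hypothesis meetDelta : forall B, B \in blocks -> #|B :&: Delta| \in [:: 0; k0].

Local Notation D0 := (induced_blocks blocks Delta).

Lemma block_through_pair x y : x != y -> exists2 B, B \in blocks & (x \in B) && (y \in B).
Proof.
have [lam_gt0 _ pairs] := design => xy.
have : 0 < #|[set B in blocks | (x \in B) && (y \in B)]| by rewrite pairs ?in_setT.
by case/card_gt0P=> B /setIdP[]; exists B.
Qed.

Lemma card_meet_class B x : B \in blocks -> x \in B -> x \in Delta -> #|B :&: Delta| = k0.
Proof.
move=> bB xB xD; have := meetDelta bB; rewrite !inE => /orP[/eqP/cards0_eq BD0 | /eqP //].
have : x \in B :&: Delta by rewrite inE xB xD.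
by rewrite BD0 inE.
Qed.

Lemma induced_block_card C : C \in D0 -> C \subset Delta /\ #|C| = k0.
Proof.
case/imsetP=> B /setIdP[bB /set0Pn[x /setIP[xB xD]]] ->.
by split; [apply: subsetIr | apply: card_meet_class xB xD].
Qed.

Lemma class_design_relation :
  2 <= k < #|P| -> 1 < #|Delta| ->
  [/\ 2 <= k0, k0 < #|Delta| & (#|P| - 1) * (k0 - 1) = (#|Delta| - 1) * (k - 1)].
Proof.
move=> k_bounds D_gt1; have [x [y [xD yD xy]]] := card_gt1P D_gt1.
have [lam_gt0 blocks_k pairs] := design.
have [B bB /andP[xB _]] := block_through_pair xy.
have k0_le : k0 <= #|Delta|.
  by rewrite -(card_meet_class bB xB xD) subset_leq_card ?subsetIr.
have pairs_x y' : x != y' -> #|[set B in blocks | (x \in B) && (y' \in B)]| = lam.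
  by move=> xy'; rewrite pairs ?in_setT.
have meet_P B' : B' \in blocks -> x \in B' -> #|B' :&: [set: P]| = k.
  by move=> /blocks_k[_ <-] _; rewrite setIT.
have rep_P := replication_count (in_setT x) (fun y' _ => pairs_x y') meet_P.
have rep_D := replication_count xD (fun y' _ => pairs_x y')
  (fun B bB xB => card_meet_class bB xB xD).
rewrite cardsT in rep_P; split; nia.
Qed.

End InducedStructure.

Section FlagTransitiveImprimitive.
Variables (P : finType) (blocks : {set {set P}}) (G : {group {perm P}}).
Variables (Sigma : {set {set P}}) (Delta : {set P}).
Hypothesis presB : preserves_blocks G blocks.
Hypothesis flagG : flag_transitive G blocks.
Hypothesis partS : partition Sigma [set: P].
Hypothesis presS : forall g D, g \in G -> D \in Sigma -> (fun x => g x) @: D \in Sigma.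
Hypothesis SigmaDelta : Delta \in Sigma.

Local Notation D0 := (induced_blocks blocks Delta).

Lemma class_stable g z :
  g \in G -> z \in Delta -> g z \in Delta -> (fun x => g x) @: Delta = Delta.
Proof.
move=> gG zD gzD; have [_ tI _] := and3P partS.
have gD := presS gG SigmaDelta.
have gz : g z \in (fun x => g x) @: Delta by apply: imset_f.
by rewrite -(def_pblock tI gD gz) (def_pblock tI SigmaDelta gzD).
Qed.

Lemma flag_transitive_class x B y C :
  B \in blocks -> x \in B -> C \in blocks -> y \in C -> x \in Delta -> y \in Delta ->
  exists2 g, g \in G &
    [/\ g x = y, (fun z => g z) @: B = C & (fun z => g z) @: Delta = Delta].
Proof.
move=> bB xB bC yC xD yD; have [g gG [gx gB]] := flagG bB xB bC yC.
by exists g; rewrite // (class_stable gG xD) ?gx.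
Qed.

Definition induced_mult (C : {set P}) := #|[set B in blocks | B :&: Delta == C]|.

Lemma induced_mult_le C C' : C \in D0 -> C' \in D0 -> induced_mult C <= induced_mult C'.
Proof.
case/imsetP=> B /setIdP[bB /set0Pn[x /setIP[xB xD]]] ->.
case/imsetP=> B' /setIdP[bB' /set0Pn[x' /setIP[xB' xD']]] ->.
have [g gG [_ gB gD]] := flag_transitive_class bB xB bB' xB' xD xD'.
have g_inj : injective (fun A : {set P} => (fun z => g z) @: A).
  exact/imset_inj/perm_inj.
have gI A : (fun z => g z) @: (A :&: Delta) = ((fun z => g z) @: A) :&: Delta.
  by rewrite imsetI ?gD // => u v _ _; apply: perm_inj.
rewrite /induced_mult -(card_imset _ g_inj); apply: subset_leq_card.
apply/subsetP=> _ /imsetP[B1 /setIdP[bB1 /eqP B1D] ->].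
by rewrite inE presB //= -gI B1D gI gB.
Qed.

Lemma induced_mult_const C C' : C \in D0 -> C' \in D0 -> induced_mult C = induced_mult C'.
Proof. by move=> CD C'D; apply/eqP; rewrite eqn_leq !induced_mult_le. Qed.

Variables (k lam k0 : nat).
Hypothesis design : is_2design [set: P] blocks k lam.
Hypothesis meetDelta : forall B, B \in blocks -> #|B :&: Delta| \in [:: 0; k0].

Lemma induced_pair_count x y C0 :
  x \in Delta -> y \in Delta -> x != y -> C0 \in D0 ->
  lam = #|[set C in D0 | (x \in C) && (y \in C)]| * induced_mult C0.
Proof.
have [_ _ pairs] := design => xD yD xy C0D.
rewrite -(pairs x y) ?in_setT // -sum1_card.
rewrite (eq_bigl (fun B => (B \in blocks) && ((x \in B) && (y \in B)))) => [|B]; last by rewrite inE.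
rewrite (partition_big (fun B => B :&: Delta)
  (mem [set C in D0 | (x \in C) && (y \in C)])) => [|B /andP[bB /andP[xB yB]]] /=; last first.
  rewrite !inE xB yB xD yD !andbT; apply/imsetP; exists B => //.
  by rewrite inE bB; apply/set0Pn; exists x; rewrite inE xB xD.
rewrite -sum_nat_const; apply: eq_bigr => C /setIdP[CD /andP[xC yC]].
rewrite -(induced_mult_const CD C0D) /induced_mult -sum1_card; apply: eq_bigl => B; rewrite inE.
case: (B :&: Delta =P C) => [BD|_]; last by rewrite !andbF.
by move: xC yC; rewrite -BD !inE => /andP[-> _] /andP[-> _]; rewrite !andbT.
Qed.

Lemma induced_2design : 1 < #|Delta| -> exists lam0, is_2design Delta D0 k0 lam0.
Proof.
case/card_gt1P=> x [y [xD yD xy]]; have [B bB /andP[xB _]] := block_through_pair design xy.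
have C0D : B :&: Delta \in D0.
  by apply/imsetP; exists B; rewrite // inE bB; apply/set0Pn; exists x; rewrite inE xB xD.
have [lam_gt0 _ _] := design.
have lam_eq := induced_pair_count xD yD xy C0D.
have := lam_gt0; rewrite lam_eq muln_gt0 => /andP[pairs_gt0 mult_gt0].
exists (lam %/ induced_mult (B :&: Delta)); split => [|C|x1 y1 x1D y1D x1y1].
- by rewrite lam_eq mulnK.
- exact: (induced_block_card meetDelta).
by rewrite (induced_pair_count x1D y1D x1y1 C0D) mulnK.
Qed.

Lemma induced_2transitive :
  k0 = 2 -> 1 < #|Delta| -> [transitive^2 'N_G(Delta | 'P), on Delta | 'P].
Proof.
move=> k0_2 /card_gt1P[x [y [xD yD xy]]].
apply: (transitive2_of_pairs (subsetIr _ _) xD yD xy) => x' y' x'D y'D x'y'.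
have [B bB /andP[xB yB]] := block_through_pair design xy.
have [C bC /andP[x'C y'C]] := block_through_pair design x'y'.
have [g gG [gx gB gD]] := flag_transitive_class bB xB bC x'C xD x'D.
have gS (z : P) (S : {set P}) : (g z \in (fun u => g u) @: S) = (z \in S).
  exact: (mem_imset _ _ (@perm_inj _ g)).
exists g; first by rewrite inE gG; apply/astabsP => z; rewrite /= apermE -{1}gD gS.
split=> //; apply: (card_le2_other (A := C :&: Delta) (a := x')).
- by rewrite (card_meet_class meetDelta bC x'C x'D) k0_2.
- by rewrite inE x'C x'D.
- by rewrite inE y'C y'D.
- by rewrite -gB -gD inE !gS yB yD.
- exact: x'y'.
- by rewrite -gx (inj_eq perm_inj) eq_sym.
Qed.

End FlagTransitiveImprimitive.

Theorem lemma3p3 (P : finType) (blocks : {set {set P}}) (k lam : nat)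
  (G : {group {perm P}}) (Sigma : {set {set P}}) (v0 k0 : nat)
  (Delta : {set P}) :
  is_2design [set: P] blocks k lam -> 2 <= k < #|P| ->
  preserves_blocks G blocks -> flag_transitive G blocks ->
  partition Sigma [set: P] ->
  (forall D, D \in Sigma -> #|D| = v0) ->
  1 < v0 -> 1 < #|Sigma| ->
  (forall g D, g \in G -> D \in Sigma -> (fun x => g x) @: D \in Sigma) ->
  0 < k0 ->
  (forall B D, B \in blocks -> D \in Sigma -> #|B :&: D| \in [:: 0; k0]) ->
  Delta \in Sigma ->
  let k1 := k %/ k0 in
  let D0 := induced_blocks blocks Delta in
  k0 < v0 /\ 2 <= k0 /\
  [\/ k0 = 2 /\ #|P| = (v0 - 1) * (2 * k1 - 1) + 1 /\
        [transitive^2 'N_G(Delta | 'P), on Delta | 'P],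
      (3 <= k0 <= v0 - 2) /\ (exists lam0, is_2design Delta D0 k0 lam0) |
      (3 <= k0 /\ k0 = v0 - 1) /\ (exists r0, is_1design Delta D0 k0 r0) /\
        (exists2 t, 2 <= t & k = t * (v0 - 2) + 1 /\ #|P| = t * (v0 - 1) + 1)].
Proof.
(* The hypothesis [0 < k0] is a consequence of [class_design_relation]. *)
move=> design k_bounds presB flagG partS Sigma_v0 v0_gt1 Sigma_gt1 presS _ meet SD k1 D0.
have meetD B : B \in blocks -> #|B :&: Delta| \in [:: 0; k0] by move=> bB; apply: meet.
have D_gt1 : 1 < #|Delta| by rewrite Sigma_v0.
have [k0_ge2 k0_lt rel] := class_design_relation design meetD k_bounds D_gt1.
rewrite Sigma_v0 // in k0_lt rel.
have k0_dvd : k0 %| k.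
  have [x [y [_ _ xy]]] := card_gt1P D_gt1.
  have [B bB _] := block_through_pair design xy.
  case: design => _ /(_ B bB)[_ <-] _.
  exact: dvdn_card_partition partS (fun D => meet B D bB).
have v_ge : 2 * v0 <= #|P|.
  by rewrite -cardsT (card_uniform_partition Sigma_v0 partS); nia.
have [lam0 D0_design] := induced_2design presB flagG partS presS SD design meetD D_gt1.
do 2!split=> //.
have [k0_2 | k0_ge3] : k0 = 2 \/ 3 <= k0 by lia.
  constructor 1; split=> //; split; first by rewrite /k1 k0_2 in rel k0_dvd *; lia.
  exact: (induced_2transitive flagG partS presS SD design meetD k0_2 D_gt1).
have [k0_v0 | k0_le] : k0 = v0 - 1 \/ k0 <= v0 - 2 by lia.
  constructor 3; split=> //; split.
    by apply: is_2design_1design D0_design _ D_gt1; lia.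
  have k_ge2 : 2 <= k by case/andP: k_bounds.
  by apply: (class_relation_pred_params _ k_ge2 v_ge); [lia | nia].
by constructor 2; split; [apply/andP | exists lam0].
Qed.
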